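(* Let $\mathcal A$ be finite, $r:\mathcal A\to[0,1]$, $\eta>0$, and $\pi^{\mathrm{ref}}\in\Delta(\mathcal A)$ with $\pi^{\mathrm{ref}}(a)>0$ for all $a$. Let $\hat\pi\in\Delta(\mathcal A)$ be any distribution with $\mathrm{supp}(\hat\pi)=\mathcal A$. Then $$\mathrm{SubOpt}(\hat\pi)=\eta^{-1}\,\mathbb E_{a\sim\pi^{\mathrm{ref}}}\Big[\psi\Big(\frac{\hat\pi(a)}{\pi^*(a)}\Big)\Big],\qquad\text{where }\psi(x)=x-1-\log x.$$
   Context: $J(\pi)=\sum_ar(a)\pi(a)-\eta^{-1}\mathrm{KL}(\pi^{\mathrm{ref}}\|\pi)$ with $\mathrm{KL}(P\|Q)=\sum_aP(a)\log(P(a)/Q(a))$; $\pi^*$ is the unique maximizer of $J$ over $\Delta(\mathcal A)$; $\mathrm{SubOpt}(\pi)=J(\pi^* )-J(\pi)$. *)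

From HB Require Import structures.
From mathcomp Require Import all_boot all_order all_algebra.
From mathcomp Require Import all_classical all_reals all_analysis.
Set Implicit Arguments. Unset Strict Implicit. Unset Printing Implicit Defensive.
Import Order.TTheory GRing.Theory Num.Theory.
Local Open Scope ring_scope.

Definition is_dist (R : realType) (A : finType) (p : A -> R) : Prop :=
  (forall a, 0 <= p a) /\ \sum_(a : A) p a = 1.

Definition KL (R : realType) (A : finType) (P Q : A -> R) : \bar R :=
  (\sum_(a : A)
     (if P a == 0%R then 0%E
      else if Q a == 0%R then +oo%E
      else (P a * ln (P a / Q a))%:E))%E.

Definition J (R : realType) (A : finType) (r : A -> R) (eta : R)
    (pref p : A -> R) : \bar R :=
  ((\sum_(a : A) r a * p a)%:E - (eta^-1)%:E * KL pref p)%E.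

Definition SubOpt (R : realType) (A : finType) (r : A -> R) (eta : R)
    (pref pistar p : A -> R) : \bar R :=
  (J r eta pref pistar - J r eta pref p)%E.

Definition psi (R : realType) (x : R) : R := x - 1 - ln x.

From HB Require Import structures.
From mathcomp Require Import all_boot all_order all_algebra.
From mathcomp Require Import all_classical all_reals all_analysis.
From mathcomp Require Import ring lra.
Import Order.TTheory GRing.Theory Num.Theory.
Local Open Scope ring_scope.

(* The maximiser pistar has full support: otherwise KL(pref || pistar) = +oo
   and J(pistar) = -oo < J(pref).  On full-support distributions J is, up to
   an additive constant, the smooth function
     Jlog(q) = sum_a r(a) q(a) + eta^-1 sum_a pref(a) log q(a).
   The line t |-> pistar + t (pihat - pistar) stays in the open simplex for
   -min pistar < t < 1, so t = 0 is an interior maximum of Jlog along it and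
   Fermat's rule gives the first-order condition
     sum_a (r(a) + eta^-1 pref(a) / pistar(a)) (pihat(a) - pistar(a)) = 0.
   Substituting it into Jlog(pistar) - Jlog(pihat) leaves exactly
   eta^-1 sum_a pref(a) psi(pihat(a) / pistar(a)). *)

Section RealLemmas.
Context {R : realType}.

Lemma is_derive_sum_fintype (I : finType) (h : I -> R -> R) (x : R)
    (dh : I -> R) :
  (forall i, is_derive x 1 (h i) (dh i)) ->
  is_derive x 1 (fun y => \sum_i h i y) (\sum_i dh i).
Proof.
move=> hd; have -> : (fun y => \sum_i h i y) = \sum_i h i.
  by apply/funext => y; rewrite fct_sumE.
by elim/big_ind2 : _ => // *; [exact: is_derive_cst | exact: is_deriveD].
Qed.

Lemma is_derive_affine (x k t : R) : is_derive t 1 (fun s => x + s * k) k.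
Proof.
have := is_deriveD (is_derive_cst x t 1)
  (is_deriveM (is_derive_id t 1) (is_derive_cst k t 1)).
by rewrite scaler0 add0r scaler1 add0r.
Qed.

Lemma is_derive_ln_affine {x k t : R} : 0 < x + t * k ->
  is_derive t 1 (fun s => ln (x + s * k)) ((x + t * k)^-1 * k).
Proof.
move=> pos.
exact: (@is_derive1_comp R (@ln R) (fun s => x + s * k) t _ _
  (is_derive1_ln pos) (is_derive_affine x k t)).
Qed.

Lemma line_gt0 (x y t : R) :
  0 < x -> 0 <= y <= 1 -> -x < t < 1 -> 0 < x + t * (y - x).
Proof.
move=> x_gt0 /andP[y_ge0 y_le1] /andP[xt t_lt1].
have [t_ge0|t_lt0] := leP 0 t.
  have : 0 < (1 - t) * x by rewrite mulr_gt0 // subr_gt0.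
  have : 0 <= t * y by rewrite mulr_ge0.
  lra.
have : t <= t * y by rewrite ler_nMr.
have : 0 <= - t * x by rewrite mulr_ge0 // ?oppr_ge0 ltW.
lra.
Qed.

End RealLemmas.

Section RegularizedObjective.
Context {R : realType} {A : finType}.

Lemma dist_le1 {p : A -> R} a : is_dist p -> p a <= 1.
Proof. by case=> p_ge0 <-; rewrite (bigD1 a) //= lerDl sumr_ge0. Qed.

Definition Jlog (r : A -> R) (eta : R) (pref q : A -> R) : R :=
  \sum_a r a * q a + eta^-1 * \sum_a pref a * ln (q a).

Lemma is_derive_Jlog_line r eta pref {q v : A -> R} {t : R} :
  (forall a, 0 < q a + t * v a) ->
  is_derive t 1 (fun s => Jlog r eta pref (fun a => q a + s * v a))
    (\sum_a r a * v a
     + eta^-1 * \sum_a pref a * ((q a + t * v a)^-1 * v a)).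
Proof.
move=> pos; apply: is_deriveD.
  apply: is_derive_sum_fintype => a.
  exact: (is_deriveZ (r a) (is_derive_affine (q a) (v a) t)).
apply: (is_deriveZ eta^-1); apply: is_derive_sum_fintype => a.
exact: (is_deriveZ (pref a) (is_derive_ln_affine (pos a))).
Qed.

Lemma Jlog_argmax_first_order {r eta pref} {q p : A -> R} :
  is_dist q -> (forall a, 0 < q a) -> is_dist p ->
  (forall s, is_dist s -> (forall a, 0 < s a) ->
     Jlog r eta pref s <= Jlog r eta pref q) ->
  \sum_a r a * (p a - q a) + eta^-1 * \sum_a pref a * ((p a - q a) / q a)
  = 0.
Proof.
move=> [_ q_sum1] q_gt0 p_dist q_max.
set v := fun a => p a - q a.
set m := \big[Order.min/1]_a q a.
have m_gt0 : 0 < m by apply: lt_bigmin.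
have line_pos t : t \in `]-m, 1[ -> forall a, 0 < q a + t * v a.
  rewrite in_itv /= => /andP[mt t_lt1] a; apply: line_gt0 => //.
    by rewrite (dist_le1 a p_dist) andbT; case: p_dist.
  by rewrite t_lt1 andbT; apply: le_lt_trans mt; rewrite lerN2 bigmin_le.
have line_dist t :
    (forall a, 0 < q a + t * v a) -> is_dist (fun a => q a + t * v a).
  move=> pos; split=> [a|]; first exact: ltW.
  rewrite big_split /= -mulr_sumr sumrB q_sum1.
  by case: p_dist => _ ->; rewrite subrr mulr0 addr0.
have Nm_le1 : -m <= 1 by rewrite (@le_trans _ _ 0) // oppr_le0 ltW.
have zero_in : (0 : R) \in `]-m, 1[ by rewrite in_itv /= oppr_lt0 m_gt0 ltr01.
set f := fun t => Jlog r eta pref (fun a => q a + t * v a).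
have f'0_eq0 : is_derive (0 : R) 1 f 0.
  apply: (derive1_at_max Nm_le1 _ zero_in) => t tI.
    by have [] := is_derive_Jlog_line r eta pref (line_pos t tI).
  have -> : f 0 = Jlog r eta pref q.
    by congr Jlog; apply/funext => a; rewrite mul0r addr0.
  exact: q_max (line_dist t (line_pos t tI)) (line_pos t tI).
have line0 a : 0 < q a + 0 * v a by rewrite mul0r addr0.
have [_ f'0] := is_derive_Jlog_line r eta pref line0.
have [_ fD0] := f'0_eq0; rewrite -[RHS]fD0 f'0; congr (_ + _ * _).
by apply: eq_bigr => a _; rewrite mul0r addr0 [_^-1 * _]mulrC.
Qed.

Lemma KL_pinfty {P Q : A -> R} {a} : P a != 0 -> Q a = 0 -> KL P Q = +oo%E.
Proof.
move=> Pa_neq0 Qa0; apply/esum_eqyP.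
  by move=> i _; case: ifP => // _; case: ifP.
by exists a; rewrite (negbTE Pa_neq0) Qa0 eqxx.
Qed.

Lemma J_Jlog r eta (pref q : A -> R) :
  (forall a, 0 < pref a) -> (forall a, 0 < q a) ->
  J r eta pref q
  = (Jlog r eta pref q - eta^-1 * \sum_a pref a * ln (pref a))%:E.
Proof.
move=> pref_gt0 q_gt0; rewrite /J.
have -> : KL pref q =
    (\sum_a pref a * ln (pref a) - \sum_a pref a * ln (q a))%:E.
  rewrite /KL -sumrB -sumEFin; apply: eq_bigr => a _.
  by rewrite (gt_eqF (pref_gt0 a)) (gt_eqF (q_gt0 a)) ln_div ?posrE ?mulrBr.
by rewrite -EFinM -EFinB /Jlog; congr EFin; ring.
Qed.

Lemma J_argmax_gt0 {r eta} {pref q : A -> R} :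
  0 < eta -> (forall a, 0 < pref a) -> is_dist pref -> is_dist q ->
  (forall p, is_dist p -> (J r eta pref p <= J r eta pref q)%E) ->
  forall a, 0 < q a.
Proof.
move=> eta_gt0 pref_gt0 pref_dist [q_ge0 _] q_max a.
rewrite lt_def q_ge0 andbT; apply/eqP => qa0.
have := q_max pref pref_dist.
rewrite [X in (_ <= X)%E]/J (KL_pinfty (lt0r_neq0 (pref_gt0 a)) qa0).
by rewrite mulry gtr0_sg ?invr_gt0 // mul1e /= leeNy_eq J_Jlog.
Qed.

Lemma SubOpt_Jlog r eta (pref q p : A -> R) :
  (forall a, 0 < pref a) -> (forall a, 0 < q a) -> (forall a, 0 < p a) ->
  SubOpt r eta pref q p = (Jlog r eta pref q - Jlog r eta pref p)%:E.
Proof. by move=> *; rewrite /SubOpt !J_Jlog // -EFinB; congr EFin; ring. Qed.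

Lemma sum_psi_ratio (w p q : A -> R) :
  (forall a, 0 < p a) -> (forall a, 0 < q a) ->
  \sum_a w a * psi (p a / q a) =
  \sum_a w a * ((p a - q a) / q a)
  - (\sum_a w a * ln (p a) - \sum_a w a * ln (q a)).
Proof.
move=> p_gt0 q_gt0; rewrite -!sumrB; apply: eq_bigr => a _.
by rewrite /psi ln_div ?posrE // mulrBl divff ?gt_eqF //; ring.
Qed.

Lemma Jlog_argmax_gap {r eta} {pref q p : A -> R} :
  is_dist q -> (forall a, 0 < q a) -> is_dist p -> (forall a, 0 < p a) ->
  (forall s, is_dist s -> (forall a, 0 < s a) ->
     Jlog r eta pref s <= Jlog r eta pref q) ->
  Jlog r eta pref q - Jlog r eta pref p
  = eta^-1 * \sum_a pref a * psi (p a / q a).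
Proof.
move=> q_dist q_gt0 p_dist p_gt0 q_max.
have := Jlog_argmax_first_order q_dist q_gt0 p_dist q_max.
rewrite sum_psi_ratio // /Jlog.
under eq_bigr do rewrite mulrBr.
by rewrite sumrB => first_order; lra.
Qed.

End RegularizedObjective.

Theorem lemmaE1 (R : realType) (A : finType) (r : A -> R) (eta : R)
    (pref pistar pihat : A -> R) :
  (forall a, 0 <= r a <= 1) ->
  0 < eta ->
  is_dist pref -> (forall a, 0 < pref a) ->
  (* p* is the unique maximizer of J over Delta(A) *)
  is_dist pistar ->
  (forall p, is_dist p -> (J r eta pref p <= J r eta pref pistar)%E) ->
  (forall p, is_dist p ->
     (forall q', is_dist q' -> (J r eta pref q' <= J r eta pref p)%E) ->
     p = pistar) ->
  (* pihat in Delta(A) with full support *)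
  is_dist pihat -> (forall a, pihat a != 0) ->
  SubOpt r eta pref pistar pihat =
    ((eta^-1 * \sum_(a : A) pref a * psi (pihat a / pistar a))%:E)%E.
Proof.
move=> _ eta_gt0 pref_dist pref_gt0 pistar_dist pistar_max _
  pihat_dist pihat_neq0.
have pihat_gt0 a : 0 < pihat a.
  by rewrite lt_def pihat_neq0; case: pihat_dist => ->.
have pistar_gt0 :=
  J_argmax_gt0 eta_gt0 pref_gt0 pref_dist pistar_dist pistar_max.
rewrite SubOpt_Jlog // (Jlog_argmax_gap pistar_dist pistar_gt0 pihat_dist
  pihat_gt0) //.
move=> s s_dist s_gt0; have := pistar_max s s_dist.
by rewrite !J_Jlog // lee_fin lerD2r.
Qed.
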